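(* If $P$ is a D-product of length $\ell$ over a finite alphabet $A$, then $h({\downarrow}P)\leq\ell+1$ and $h({\downarrow}_<P)\leq\ell+1$.
   Context: A D-product is a regular expression $E_1E_2\cdots E_\ell$ where each $E_i$ is either $B^*$ for some subalphabet $B\subseteq A$ or a single letter $a\in A$; $\ell$ is its length, and $P$ also denotes the language of the expression. $u\sqsubseteq v$ (subword) means $u=a_1\cdots a_n$ with letters $a_i$ and $v=v_0a_1v_1\cdots a_nv_n$; $u\sqsubset v$ means $u\sqsubseteq v$, $u\ne v$. ${\downarrow}L=\{v~|~\exists u\in L: v\sqsubseteq u\}$, ${\downarrow}_<L=\{v~|~\exists u\in L: v\sqsubset u\}$. $u\sim_n v$ iff $u,v$ have the same subwords of length at most $n$; $L$ is $n$-PT if it is a union of $\sim_n$-classes, and $h(L)$ is the least such $n$. *)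

From mathcomp Require Import all_boot.
Set Implicit Arguments. Unset Strict Implicit. Unset Printing Implicit Defensive.

(* A factor of a D-product: either B^* for a subalphabet B, or a letter a. *)
Inductive ditem (A : finType) : Type :=
  | DStar of {set A}
  | DLetter of A.
Arguments DStar {A}. Arguments DLetter {A}.

Definition item_lang (A : finType) (e : ditem A) : seq A -> Prop :=
  match e with
  | DStar B => fun u => all (fun x => x \in B) u
  | DLetter a => fun u => u = [:: a]
  end.

Definition dproduct (A : finType) := seq (ditem A).

Fixpoint dlang (A : finType) (P : dproduct A) : seq A -> Prop :=
  match P with
  | [::] => fun w => w = [::]
  | e :: P' => fun w => exists u v, w = u ++ v /\ item_lang e u /\ dlang P' v
  end.

Definition subword (A : eqType) (u v : seq A) : bool := subseq u v.
Definition ssubword (A : eqType) (u v : seq A) : bool := subseq u v && (u != v).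

Definition downclosure (A : eqType) (L : seq A -> Prop) : seq A -> Prop :=
  fun v => exists u, L u /\ subword v u.
Definition sdownclosure (A : eqType) (L : seq A -> Prop) : seq A -> Prop :=
  fun v => exists u, L u /\ ssubword v u.

Definition simn (A : eqType) (n : nat) (u v : seq A) : Prop :=
  forall w : seq A, size w <= n -> subword w u = subword w v.

Definition nPT (A : eqType) (n : nat) (L : seq A -> Prop) : Prop :=
  forall u v, simn n u v -> (L u <-> L v).

(* h(L) <= m : the least n with L n-PT exists and is at most m. *)
Definition h_le (A : eqType) (L : seq A -> Prop) (m : nat) : Prop :=
  exists n, n <= m /\ nPT n L.

From Stdlib Require Import Classical.
From mathcomp Require Import all_boot.

Set Implicit Arguments.
Unset Strict Implicit.
Unset Printing Implicit Defensive.

(* A subword-closed language L is n-PT as soon as every word outside L has a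
   subword of length at most n outside L: ~_n-equivalent words share that
   subword.  For ↓P such short obstructions are built by induction on P,
   reading the word from the left: a letter the first factor can absorb is
   dropped (a star) or matched (a letter), and a letter it cannot absorb is
   kept as the first letter of an obstruction for the remaining factors.
   A word outside ↓<P but inside ↓P is a ⊑-maximal word of P, so each of its
   star factors is read as the empty word and its length is at most ℓ. *)

Section SubwordClosed.
Variable T : eqType.
Implicit Types (L : seq T -> Prop) (u v w x y z s : seq T).

Definition subword_closed L := forall w v, subseq w v -> L v -> L w.

Definition small_obstructions L n :=
  forall v, ~ L v -> exists w, [/\ subseq w v, size w <= n & ~ L w].

Lemma subword_closed_nPT L n :
  subword_closed L -> small_obstructions L n -> nPT n L.
Proof.
move=> closedL obsL.
suff simn_L u v : simn n u v -> L u -> L v.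
  by move=> u v uv; split; apply: simn_L => // w /uv ->.
move=> uv Lu; apply: NNPP => /obsL [w [wv w_size notLw]].
apply: notLw (closedL w u _ Lu).
by have := uv w w_size; rewrite /subword => ->.
Qed.

Lemma downclosure_closed L : subword_closed (downclosure L).
Proof. by move=> w v wv [u [Lu vu]]; exists u; split; last exact: subseq_trans vu. Qed.

Lemma ssubwordE u v : ssubword u v = subseq u v && (size u < size v).
Proof.
rewrite /ssubword; case uv: (subseq u v) => //=.
by rewrite ltn_neqAle (size_subseq uv) andbT (eq_leqif (size_subseq_leqif uv)).
Qed.

Lemma ssubword_catl x y u : ssubword y u -> ssubword (x ++ y) (x ++ u).
Proof.
by rewrite !ssubwordE !size_cat ltn_add2l => /andP[yu ->]; rewrite cat_subseq.
Qed.

Lemma sdownclosure_closed L : subword_closed (sdownclosure L).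
Proof.
move=> w v wv [u [Lu]]; rewrite !ssubwordE => /andP[vu vu_size].
exists u; split => //.
by rewrite ssubwordE (subseq_trans wv vu) (leq_ltn_trans (size_subseq wv) vu_size).
Qed.

Lemma subseq_cons_split c s w : subseq w (c :: s) ->
  exists z, [/\ subseq z s, subseq w (c :: z) & size z <= size w].
Proof.
case: w => [|d w] /=; first by exists [::]; rewrite !sub0seq.
case: eqP => _ ws; first by exists w; rewrite subseq_refl.
by exists (d :: w); rewrite subseq_refl.
Qed.

Lemma subseq_cons_skip c z x y :
  c \notin x -> subseq (c :: z) (x ++ y) -> subseq (c :: z) y.
Proof.
elim: x => [//|b x IHx]; rewrite inE negb_or => /andP[cb cx] /=.
by rewrite (negbTE cb); exact: IHx.
Qed.

End SubwordClosed.

Section DProduct.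
Variable A : finType.
Implicit Types (P : dproduct A) (e : ditem A) (u v w x y z s : seq A).

Local Notation D P := (downclosure (dlang P)).
Local Notation SD P := (sdownclosure (dlang P)).

Lemma item_lang_inhabited e : exists x, item_lang e x.
Proof. by case: e => [B|a]; [exists [::] | exists [:: a]]. Qed.

Lemma downclosure_nil P : D P [::].
Proof.
elim: P => [|e P [u [Pu _]]]; first by exists [::].
have [x ex] := item_lang_inhabited e.
by exists (x ++ u); split; [exists x, u | exact: sub0seq].
Qed.

Lemma downclosure_cons_weaken e P v : D P v -> D (e :: P) v.
Proof.
move=> [u [Pu vu]]; have [x ex] := item_lang_inhabited e.
exists (x ++ u); split; first by exists x, u.
exact: subseq_trans vu (suffix_subseq x u).
Qed.

Lemma downclosure_cons_skip e P c z :
  (forall x, item_lang e x -> c \notin x) -> D (e :: P) (c :: z) -> D P (c :: z).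
Proof.
move=> avoid [_ [[x [y [-> [ex Py]]]] czxy]].
by exists y; split; last exact: subseq_cons_skip (avoid _ ex) czxy.
Qed.

Lemma downclosure_star_cons (B : {set A}) P c v :
  c \in B -> D (DStar B :: P) v -> D (DStar B :: P) (c :: v).
Proof.
move=> cB [_ [[x [y [-> [Bx Py]]]] vxy]].
exists ((c :: x) ++ y); split; first by exists (c :: x), y; rewrite /= cB.
by rewrite /subword /= eqxx.
Qed.

Lemma downclosure_letter_cons a P v : D (DLetter a :: P) (a :: v) <-> D P v.
Proof.
split.
- move=> [_ [[x [y [-> [/= -> Py]]]]]]; rewrite /subword /= eqxx => vy.
  by exists y.
- move=> [u [Pu vu]]; exists (a :: u); split; first by exists [:: a], u.
  by rewrite /subword /= eqxx.
Qed.

Lemma obstruction_cons_skip e P c s :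
  small_obstructions (D P) (size P).+1 ->
  (forall x, item_lang e x -> c \notin x) -> ~ D (e :: P) (c :: s) ->
  exists w, [/\ subseq w (c :: s), size w <= (size (e :: P)).+1 & ~ D (e :: P) w].
Proof.
move=> obsP avoid notDcs.
have [|w [w_cs w_size notDw]] := obsP (c :: s).
  by move=> /(downclosure_cons_weaken e).
have [z [zs w_cz z_size]] := subseq_cons_split w_cs.
exists (c :: z); split; first by rewrite /= eqxx.
- by rewrite /= ltnS (leq_trans z_size).
- by move=> /(downclosure_cons_skip avoid) /(downclosure_closed w_cz).
Qed.

Lemma downclosure_small_obstructions P : small_obstructions (D P) (size P).+1.
Proof.
elim: P => [|e P IH] v notDv.
  case: v notDv => [|c s] notDv; first by case: notDv; exact: downclosure_nil.
  exists [:: c]; split => //; first by rewrite /= eqxx sub0seq.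
  by move=> [_ [/= -> ]].
case: e notDv => [B|a] notDv.
  elim: v notDv => [|c s IHs] notDv; first by case: notDv; exact: downclosure_nil.
  have [cB | cNB] := boolP (c \in B).
    have [|w [ws w_size notDw]] := IHs; first by move=> /(downclosure_star_cons cB).
    by exists w; split => //; exact: subseq_trans ws (subseq_cons s c).
  by apply: obstruction_cons_skip => // x Bx; apply: contra cNB; exact: (allP Bx).
case: v notDv => [|c s] notDv; first by case: notDv; exact: downclosure_nil.
have [cE | ca] := eqVneq c a; last first.
  by apply: obstruction_cons_skip => // x /= ->; rewrite mem_seq1.
rewrite {}cE in notDv *.
have [|w [ws w_size notDw]] := IH s; first by move=> Ds; apply: notDv; exact/downclosure_letter_cons.
exists (a :: w); split => //; first by rewrite /= eqxx.
by move/downclosure_letter_cons.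
Qed.

(* A nonempty star factor can repeat its first letter. *)
Lemma dlang_strict_extension P v :
  dlang P v -> size P < size v -> exists u, dlang P u /\ ssubword v u.
Proof.
elim: P v => [|e P IH] v /=; first by move=> ->.
move=> [x [y [-> [ex Py]]]].
have extend_suffix : size P < size y -> exists u, dlang (e :: P) u /\ ssubword (x ++ y) u.
  move=> /(IH y Py) [u [Pu yu]].
  by exists (x ++ u); split; [exists x, u | exact: ssubword_catl].
case: e ex extend_suffix => [B|a] /= ex extend_suffix; last by move: extend_suffix; rewrite ex /= ltnS.
case: x ex extend_suffix => [|b x] ex extend_suffix; first by move=> /ltnW; exact: extend_suffix.
move=> _; exists (b :: (b :: x) ++ y); split.
  by exists (b :: b :: x), y; move: ex => /= /andP[-> ->].
by rewrite ssubwordE subseq_cons /=.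
Qed.

Lemma sdownclosure_small_obstructions P : small_obstructions (SD P) (size P).+1.
Proof.
move=> v notSDv.
have [[u [Pu vu]] | notDv] := classic (D P v); last first.
  have [w [wv w_size notDw]] := downclosure_small_obstructions notDv.
  by exists w; split => // -[u [Pu /andP[wu _]]]; apply: notDw; exists u.
have Pv : dlang P v.
  have [-> // | vNu] := eqVneq v u.
  by case: notSDv; exists u; split => //; apply/andP.
exists v; split => //; apply: leqW; rewrite leqNgt; apply/negP.
by move=> /(dlang_strict_extension Pv) [w [Pw vw]]; apply: notSDv; exists w.
Qed.

End DProduct.

Theorem proposition12 (A : finType) (P : dproduct A) :
  h_le (downclosure (dlang P)) (size P).+1 /\
  h_le (sdownclosure (dlang P)) (size P).+1.
Proof.
split; exists (size P).+1; split => //; apply: subword_closed_nPT.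
- exact: downclosure_closed.
- exact: downclosure_small_obstructions.
- exact: sdownclosure_closed.
- exact: sdownclosure_small_obstructions.
Qed.
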